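(* Consider the setting and algorithm described in the context, and assume: (A1) bounded delay: there is an integer $\tau\ge0$ such that for every $i\in[m]$ and $t\ge0$, $i\in\mathcal{A}_t\cup\cdots\cup\mathcal{A}_{\max\{t-\tau,0\}}$; (A2) each $\mathcal{L}_j$ is differentiable with $\|\nabla\mathcal{L}_j(x)-\nabla\mathcal{L}_j(y)\|\le L\|x-y\|$; (A3) each $\mathcal{L}_j$ is strongly convex with modulus $\sigma^2>0$: $\mathcal{L}_j(x)\ge\mathcal{L}_j(y)+\langle\nabla\mathcal{L}_j(y),x-y\rangle+\frac{\sigma^2}{2}\|x-y\|^2$ for all $x,y$. Let $\delta_1>0$ satisfy $\delta_1>(2L+\rho+1)/\sigma^2$. Then for every $t\ge0$, $\frac{1}{\frac{\rho}{2}(1+\delta_1)+\delta_1}\big(F(x^{t+1},x^t)-F(x^*,x^* )\big)\le\frac{\delta_1L+\frac{\rho}{2}(1+\delta_1)}{\frac{\rho}{2}(1+\delta_1)+\delta_1}\|x^t-x^{t+1}\|^2+\frac{1}{\frac{\rho}{2}(1+\delta_1)+\delta_1}\cdot\frac{\delta_1}{2m}L^2\sum_{j\in[m]}\|x^{t_j}-x^t\|^2.$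
   Context: Problem setting: integers $m\ge 2$, $n\ge1$, $p\ge1$. For $j\in[m]$, $i\in[n]$, $l_{ji}:\mathbb{R}^p\to\mathbb{R}$ are smooth loss functions; $h:\mathbb{R}^p\to\mathbb{R}\cup\{+\infty\}$ is proper, lower semicontinuous and convex. $\mathcal{L}_j(x)=\frac1n\sum_{i}l_{ji}(x)$, $\mathcal{L}(x)=\frac1m\sum_j\mathcal{L}_j(x)+h(x)$, and $x^*$ is the minimizer of $\mathcal{L}$. Machine 1 is the master. Algorithm EDANNI: given $x^0$ and $\rho\ge0$, at each iteration $t=0,1,\dots$ there is a set $\mathcal{A}_t\subseteq[m]$ of machines whose gradients arrive at iteration $t$, with $\mathcal{A}_0=[m]$; $t_j$ is the latest iteration $s\le t$ with $j\in\mathcal{A}_s$ (with $t_1=t$). The master updates $x^{t+1}=\arg\min_{x}\ \mathcal{L}_1(x)+h(x)+\frac{\rho}{2}\|x-x^t\|^2+\Big\langle \frac1m\sum_{j\in[m]}\nabla\mathcal{L}_j(x^{t_j})-\nabla\mathcal{L}_1(x^{t_1}),\,x-x^t\Big\rangle.$ Define $F(x,y)=\frac1m\sum_{j\in[m]}\mathcal{L}_j(x)+\frac{\rho}{2}\|x-y\|^2+h(x)$, so $F(x^*,x^* )=\mathcal{L}(x^* )$. *)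

From HB Require Import structures.
From mathcomp Require Import all_boot all_order all_algebra.
From mathcomp Require Import all_classical all_reals all_analysis.
Set Implicit Arguments. Unset Strict Implicit. Unset Printing Implicit Defensive.
Import Order.TTheory GRing.Theory Num.Theory.
Import numFieldNormedType.Exports.
Local Open Scope ring_scope.

Section Defs.
Context {R : realType} {p : nat}.
Local Notation V := 'rV[R]_p.

Definition dotv (u v : V) : R := \sum_(k < p) u ord0 k * v ord0 k.
Definition sqnorm (u : V) : R := dotv u u.
Definition enorm (u : V) : R := Num.sqrt (sqnorm u).

Definition is_gradient (f : V -> R) (g : V -> V) : Prop :=
  forall x : V, differentiable f x /\ forall v : V, 'd f x v = dotv (g x) v.

Definition proper_fun (h : V -> \bar R) : Prop :=
  (forall x, h x != -oo%E) /\ exists x, h x != +oo%E.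
Definition convex_efun (h : V -> \bar R) : Prop :=
  forall (x y : V) (a : R), 0 <= a <= 1 ->
    (h (a *: x + (1 - a) *: y)%R <= (a%:E * h x + (1 - a)%:E * h y))%E.
Definition lsc_efun (h : V -> \bar R) : Prop := lower_semicontinuous h.

End Defs.

(* Latest iteration s <= t at which machine j's gradient arrived;
   the master (index with value 0) always uses the current iterate. *)
Definition last_arrival {m : nat} (A : nat -> 'I_m -> bool) (t : nat) (j : 'I_m) : nat :=
  if val j == 0%N then t else (\max_(s < t.+1 | A s j) (val s))%N.

From HB Require Import structures.
From mathcomp Require Import all_boot all_order all_algebra.
From mathcomp Require Import all_classical all_reals all_analysis.
From mathcomp Require Import ring lra.
Set Implicit Arguments. Unset Strict Implicit. Unset Printing Implicit Defensive.
Import Order.TTheory GRing.Theory Num.Theory.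
Local Open Scope ring_scope.

(* The minimality of x^{t+1} in the subproblem, h being convex, yields the
   first-order inequality
     h(x^{t+1}) - h(x* ) <= <grad L_1(x^{t+1}) + rho (x^{t+1} - x^t) + G_t, u>,
   u = x* - x^{t+1}, G_t the delayed gradient correction.  Strong convexity of
   the L_j at x^{t+1} bounds the smooth part of the gap by the inner products
   with the current gradients minus sigma^2/2 |u|^2, so only gradient
   differences remain: by Lipschitz continuity and the triangle inequality
   through x^t they are at most L |x^t - x^{t+1}| |u| and
   L (|x^{t_j} - x^t| + |x^t - x^{t+1}|) |u|.  Young's inequality with weight
   delta_1 splits these products, and delta_1 sigma^2 > 2L + rho + 1 lets
   -sigma^2/2 |u|^2 absorb every |u|^2 term. *)

Section Euclidean.
Context {R : realType} {p : nat}.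
Local Notation V := 'rV[R]_p.
Implicit Types u v w : V.

Lemma dotvC u v : dotv u v = dotv v u.
Proof. by apply: eq_bigr => k _; rewrite mulrC. Qed.

Lemma dotvDl u v w : dotv (u + v) w = dotv u w + dotv v w.
Proof. by rewrite /dotv -big_split; apply: eq_bigr => k _; rewrite mxE mulrDl. Qed.

Lemma dotvNl u w : dotv (- u) w = - dotv u w.
Proof. by rewrite /dotv -sumrN; apply: eq_bigr => k _; rewrite mxE mulNr. Qed.

Lemma dotvBl u v w : dotv (u - v) w = dotv u w - dotv v w.
Proof. by rewrite dotvDl dotvNl. Qed.

Lemma dotvZl a u w : dotv (a *: u) w = a * dotv u w.
Proof. by rewrite /dotv big_distrr; apply: eq_bigr => k _; rewrite mxE -mulrA. Qed.

Lemma dotv_suml m (f : 'I_m -> V) w :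
  dotv (\sum_(j < m) f j) w = \sum_(j < m) dotv (f j) w.
Proof.
rewrite /dotv exchange_big; apply: eq_bigr => k _.
by rewrite summxE big_distrl.
Qed.

Lemma dotv0l w : dotv 0 w = 0.
Proof. by rewrite /dotv big1 // => k _; rewrite mxE mul0r. Qed.

Lemma dotvDr u v w : dotv w (u + v) = dotv w u + dotv w v.
Proof. by rewrite dotvC dotvDl !(dotvC w). Qed.

Lemma dotvNr u w : dotv w (- u) = - dotv w u.
Proof. by rewrite dotvC dotvNl dotvC. Qed.

Lemma dotvZr a u w : dotv w (a *: u) = a * dotv w u.
Proof. by rewrite dotvC dotvZl dotvC. Qed.

Lemma sqnorm_ge0 u : 0 <= sqnorm u.
Proof. by apply: sumr_ge0 => k _; rewrite -expr2 sqr_ge0. Qed.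

Lemma sqnorm0 : sqnorm (0 : V) = 0.
Proof. exact: dotv0l. Qed.

Lemma sqnorm_eq0 u : sqnorm u = 0 -> u = 0.
Proof.
move=> /eqP; rewrite psumr_eq0 => [/allP u0|k _]; last by rewrite -expr2 sqr_ge0.
apply/rowP => k; rewrite !mxE; have /implyP := u0 k (mem_index_enum k).
by rewrite mulf_eq0 orbb => /(_ isT)/eqP.
Qed.

Lemma sqnormN u : sqnorm (- u) = sqnorm u.
Proof. by rewrite /sqnorm dotvNl dotvNr opprK. Qed.

Lemma sqnormD u v : sqnorm (u + v) = sqnorm u + 2 * dotv u v + sqnorm v.
Proof. by rewrite /sqnorm dotvDl !dotvDr (dotvC v u); ring. Qed.

Lemma sqnormZ a u : sqnorm (a *: u) = a ^+ 2 * sqnorm u.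
Proof. by rewrite /sqnorm dotvZl dotvZr mulrA. Qed.

Lemma enorm_ge0 u : 0 <= enorm u.
Proof. exact: sqrtr_ge0. Qed.

Lemma enorm_sqr u : enorm u ^+ 2 = sqnorm u.
Proof. by rewrite sqr_sqrtr // sqnorm_ge0. Qed.

Lemma enormN u : enorm (- u) = enorm u.
Proof. by rewrite /enorm sqnormN. Qed.

Lemma dotv_le_enorm u v : dotv u v <= enorm u * enorm v.
Proof.
have [a0|a_gt0] := eqVneq (enorm u) 0.
  by rewrite a0 mul0r (@sqnorm_eq0 u) ?dotv0l // -enorm_sqr a0 expr0n.
have [b0|b_gt0] := eqVneq (enorm v) 0.
  by rewrite b0 mulr0 dotvC (@sqnorm_eq0 v) ?dotv0l // -enorm_sqr b0 expr0n.
(* [0 <= | |v| u - |u| v |^2 = 2 |u| |v| (|u| |v| - <u, v>)] *)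
have := sqnorm_ge0 (enorm v *: u - enorm u *: v).
rewrite sqnormD sqnormN !sqnormZ dotvZl dotvNr dotvZr -!enorm_sqr.
have := enorm_ge0 u; have := enorm_ge0 v.
rewrite !le0r (negPf a_gt0) (negPf b_gt0) /= => b0 a0.
have ab0 := mulr_gt0 a0 b0; nra.
Qed.

Lemma enormD u v : enorm (u + v) <= enorm u + enorm v.
Proof.
have uv := dotv_le_enorm u v.
have : enorm (u + v) ^+ 2 <= (enorm u + enorm v) ^+ 2.
  by rewrite enorm_sqr sqnormD -!enorm_sqr; nra.
have := enorm_ge0 (u + v); have := enorm_ge0 u; have := enorm_ge0 v; nra.
Qed.

Lemma lipschitz_ge0 (g : V -> V) (L : R) : (0 < p)%N ->
  (forall x y, enorm (g x - g y) <= L * enorm (x - y)) -> 0 <= L.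
Proof.
move=> p_gt0 gL; pose one : V := const_mx 1.
have one_gt0 : 0 < enorm (one - 0).
  rewrite subr0 sqrtr_gt0 /sqnorm /dotv.
  under eq_bigr do rewrite mxE mul1r.
  by rewrite sumr_const card_ord ltr0n.
have := gL one 0; have := enorm_ge0 (g one - g 0); nra.
Qed.

End Euclidean.

Lemma young (R : realFieldType) (a b k : R) :
  0 < k -> a * b <= k / 2 * a ^+ 2 + b ^+ 2 / (2 * k).
Proof.
move=> k_gt0.
have -> : k / 2 * a ^+ 2 + b ^+ 2 / (2 * k) = a * b + (k * a - b) ^+ 2 / (2 * k).
  by field; rewrite gt_eqF.
by rewrite lerDl divr_ge0 ?sqr_ge0 // mulr_ge0 // ltW.
Qed.

Lemma ler_of_forall_unit_scale (R : realFieldType) (a b M : R) : 0 <= M ->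
  (forall s, 0 < s <= 1 -> a <= b + s * M) -> a <= b.
Proof.
move=> M_ge0 abM; apply/ler_addgt0Pr => e e_gt0.
have eM_gt0 : 0 < e + M by rewrite ltr_wpDr.
have s_gt0 : 0 < e / (e + M) by rewrite divr_gt0.
have s_le1 : e / (e + M) <= 1 by rewrite ler_pdivrMr // mul1r lerDl.
have := abM (e / (e + M)); rewrite s_gt0 s_le1 => /(_ isT) /le_trans; apply.
by rewrite lerD2l mulrAC ler_pdivrMr //; nra.
Qed.

Lemma fin_num_of_EFin_addle (R : numDomainType) (a b : R) (e e' : \bar R) :
  e != -oo%E -> e' \is a fin_num -> (a%:E + e <= b%:E + e')%E -> e \is a fin_num.
Proof.
move=> e_ninfty /fineK <- ; rewrite fin_numE e_ninfty /=.
by apply: contraTneq => ->; rewrite -EFinD.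
Qed.

Section CompositeMinimizer.
Context {R : realType} {p : nat}.
Local Notation V := 'rV[R]_p.
Variables (f : V -> R) (h : V -> \bar R).
Hypothesis h_convex : convex_efun h.

(* Comparing [y] with the points [s w + (1 - s) y] of the segment towards [w]
   and letting [s -> 0] turns the minimality of [f + h] at [y] into a
   first-order condition. *)
Lemma composite_minimizer_slope (y w : V) (X K : R) :
  0 <= K -> h y \is a fin_num -> h w \is a fin_num ->
  (forall z, ((f y)%:E + h y <= (f z)%:E + h z)%E) ->
  (forall s, 0 < s <= 1 -> f (s *: w + (1 - s) *: y) - f y <= s * X + s ^+ 2 * K) ->
  fine (h y) - fine (h w) <= X.
Proof.
move=> K_ge0 /fineK hy /fineK hw y_min f_slope.
apply: (ler_of_forall_unit_scale K_ge0) => s s_range.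
have /andP[s_gt0 s_le1] := s_range.
set z := s *: w + (1 - s) *: y.
have := @h_convex w y s; rewrite (ltW s_gt0) s_le1 => /(_ isT) hz_conv.
rewrite -/z -hy -hw -!EFinM -EFinD in hz_conv.
have /fineK hz : h z \is a fin_num.
  rewrite fin_numE; apply/andP; split.
    by apply: contraTneq (y_min z) => ->; rewrite -hy -EFinD addeNy leNgt ltNye.
  by apply: contraTneq hz_conv => ->; rewrite leNgt ltey.
move: (y_min z) hz_conv (f_slope s s_range).
rewrite -hy -hz -!EFinD !lee_fin => yz zconv zslope.
rewrite -(ler_pM2l s_gt0); lra.
Qed.

End CompositeMinimizer.

Section GradientBounds.
Context {R : realType} {p : nat}.
Local Notation V := 'rV[R]_p.
Variables (f : V -> R) (g : V -> V) (L : R).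
Hypothesis f_convex : forall x y, f y + dotv (g y) (x - y) <= f x.
Hypothesis g_lipschitz : forall x y, enorm (g x - g y) <= L * enorm (x - y).

Lemma dotv_gradB_le (a b u : V) : dotv (g a - g b) u <= L * enorm (a - b) * enorm u.
Proof. exact: le_trans (dotv_le_enorm _ _) (ler_wpM2r (enorm_ge0 u) (g_lipschitz a b)). Qed.

Lemma lipschitz_gradient_upper_bound (y z : V) :
  f z - f y <= dotv (g y) (z - y) + L * sqnorm (z - y).
Proof.
have := f_convex y z; rewrite -opprB dotvNr.
have := dotv_gradB_le z y (z - y); rewrite -mulrA -expr2 enorm_sqr dotvBl.
lra.
Qed.

Lemma delayed_gradient_le (delta : R) (a xt y u : V) : 0 <= L -> 0 < delta ->
  dotv (g a - g y) u <= L * enorm (xt - y) * enorm u + sqnorm u / (2 * delta)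
                        + delta / 2 * L ^+ 2 * sqnorm (a - xt).
Proof.
move=> L_ge0 delta_gt0.
have tri : enorm (a - y) <= enorm (a - xt) + enorm (xt - y).
  by have := enormD (a - xt) (xt - y); rewrite addrA subrK.
have := young (L * enorm (a - xt)) (enorm u) delta_gt0.
rewrite exprMn enorm_sqr enorm_sqr.
have := dotv_gradB_le a y u; have := enorm_ge0 u.
have := ler_wpM2l L_ge0 tri; nra.
Qed.

Lemma prox_objective_increment (rho : R) (G xt y z : V) :
  (f z + rho / 2 * sqnorm (z - xt) + dotv G (z - xt))
  - (f y + rho / 2 * sqnorm (y - xt) + dotv G (y - xt))
  <= dotv (g y + rho *: (y - xt) + G) (z - y) + (L + rho / 2) * sqnorm (z - y).
Proof.
have := lipschitz_gradient_upper_bound y z.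
have -> : z - xt = (z - y) + (y - xt) by rewrite addrA subrK.
move: (z - y) (y - xt) => w d.
rewrite sqnormD dotvDr !dotvDl dotvZl (dotvC d); lra.
Qed.

Lemma prox_step_optimality (h : V -> \bar R) (rho : R) (G xt y w : V) :
  convex_efun h -> 0 <= L -> 0 <= rho -> h y \is a fin_num -> h w \is a fin_num ->
  (forall z, ((f y + rho / 2 * sqnorm (y - xt) + dotv G (y - xt))%:E + h y
              <= (f z + rho / 2 * sqnorm (z - xt) + dotv G (z - xt))%:E + h z)%E) ->
  fine (h y) - fine (h w) <= dotv (g y + rho *: (y - xt) + G) (w - y).
Proof.
move=> h_convex L_ge0 rho_ge0 hy hw y_min.
pose K := (L + rho / 2) * sqnorm (w - y).
have K_ge0 : 0 <= K by rewrite mulr_ge0 ?sqnorm_ge0 //; lra.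
apply: (composite_minimizer_slope h_convex K_ge0 hy hw y_min) => s _ /=.
apply: le_trans (prox_objective_increment _ _ _ _ _) _.
have -> : s *: w + (1 - s) *: y - y = s *: (w - y).
  by rewrite scalerBl scale1r scalerBr addrCA addrAC subrr add0r.
by rewrite dotvZr sqnormZ /K; lra.
Qed.

End GradientBounds.

Section MeanGap.
Context {R : realType} {p : nat}.
Local Notation V := 'rV[R]_p.
Variables (m : nat) (f : 'I_m -> V -> R) (g : 'I_m -> V -> V) (L sigma2 : R).
Hypothesis f_strongly_convex : forall j x y,
  f j y + dotv (g j y) (x - y) + sigma2 / 2 * sqnorm (x - y) <= f j x.
Hypothesis g_lipschitz : forall j x y, enorm (g j x - g j y) <= L * enorm (x - y).
Hypothesis L_ge0 : 0 <= L.

Lemma delayed_gap_le j (delta : R) (a xt y w : V) : 0 < delta ->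
  f j y - f j w + dotv (g j a) (w - y)
  <= L * enorm (xt - y) * enorm (w - y)
     + (1 / (2 * delta) - sigma2 / 2) * sqnorm (w - y)
     + delta / 2 * L ^+ 2 * sqnorm (a - xt).
Proof.
move=> delta_gt0; have := f_strongly_convex j w y.
have := delayed_gradient_le (g_lipschitz j) a xt y (w - y) L_ge0 delta_gt0.
rewrite dotvBl; lra.
Qed.

Lemma mean_delayed_gap_le (delta : R) (a : 'I_m -> V) (xt y w : V) :
  (0 < m)%N -> 0 < delta ->
  m%:R^-1 * \sum_(j < m) (f j y - f j w) + m%:R^-1 * \sum_(j < m) dotv (g j (a j)) (w - y)
  <= L * enorm (xt - y) * enorm (w - y)
     + (1 / (2 * delta) - sigma2 / 2) * sqnorm (w - y)
     + delta / (2 * m%:R) * L ^+ 2 * \sum_(j < m) sqnorm (a j - xt).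
Proof.
move=> m_gt0 delta_gt0; have m_gt0R : 0 < m%:R :> R by rewrite ltr0n.
set T := L * _ * _ + _.
rewrite -mulrDr -big_split ler_pdivrMl //.
apply: le_trans (_ : _ <= \sum_(j < m) (T + delta / 2 * L ^+ 2 * sqnorm (a j - xt))) _.
  by apply: ler_sum => j _; exact: delayed_gap_le.
rewrite big_split sumr_const card_ord -big_distrr /= mulrDr -[T *+ m]mulr_natl lerD2l.
by rewrite le_eqVlt; apply/orP; left; apply/eqP; field; rewrite gt_eqF.
Qed.

End MeanGap.

Lemma cross_term_absorption (R : realFieldType) (L rho sigma2 delta e u : R) :
  0 <= L -> 0 <= rho -> 0 < sigma2 -> (2 * L + rho + 1) / sigma2 < delta ->
  0 <= e -> 0 <= u ->
  rho / 2 * e ^+ 2 + (2 * L + rho) * (e * u) + (1 / (2 * delta) - sigma2 / 2) * u ^+ 2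
  <= (delta * L + rho / 2 * (1 + delta)) * e ^+ 2.
Proof.
move=> L_ge0 rho_ge0 sigma2_gt0 delta_large e_ge0 u_ge0.
have delta_gt0 : 0 < delta by apply: lt_trans delta_large; rewrite divr_gt0 //; lra.
have u_coef_le0 : (2 * L + rho + 1) / (2 * delta) - sigma2 / 2 <= 0.
  rewrite subr_le0 ler_pdivrMr ?mulr_gt0 //.
  by move: delta_large; rewrite ltr_pdivrMr // => ?; nra.
have u_term : (2 * L + rho) * (u ^+ 2 / (2 * delta)) + (1 / (2 * delta) - sigma2 / 2) * u ^+ 2
    = ((2 * L + rho + 1) / (2 * delta) - sigma2 / 2) * u ^+ 2.
  by field; rewrite gt_eqF.
have := mulr_le0_ge0 u_coef_le0 (sqr_ge0 u).
have : 0 <= 2 * L + rho by lra.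
move/ler_wpM2l/(_ _ _ (young e u delta_gt0)).
lra.
Qed.

Theorem lemma4 (R : realType) (m n p : nat)
  (hm : (2 <= m)%N) (hn : (1 <= n)%N) (hp : (1 <= p)%N)
  (* machine 1 = the master, index with value 0 *)
  (i1 : 'I_m) (hi1 : val i1 = 0%N)
  (l : 'I_m -> 'I_n -> 'rV[R]_p -> R)
  (h : 'rV[R]_p -> \bar R)
  (hproper : proper_fun h) (hlsc : lsc_efun h) (hconv : convex_efun h)
  (* L_j and its gradient *)
  (Lj : 'I_m -> 'rV[R]_p -> R)
  (hLj : forall j x, Lj j x = n%:R^-1 * \sum_(i < n) l j i x)
  (gL : 'I_m -> 'rV[R]_p -> 'rV[R]_p)
  (hgrad : forall j, is_gradient (Lj j) (gL j))
  (* A2: Lipschitz gradients *)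
  (L : R) (hLip : forall j x y, enorm (gL j x - gL j y) <= L * enorm (x - y))
  (* A3: strong convexity with modulus sigma^2 > 0 *)
  (sigma : R) (hsigma : 0 < sigma ^+ 2)
  (hsc : forall j x y, Lj j x >= Lj j y + dotv (gL j y) (x - y)
                                 + sigma ^+ 2 / 2 * sqnorm (x - y))
  (* the minimizer x* of cal L = 1/m sum_j L_j + h *)
  (xstar : 'rV[R]_p)
  (hxstar : forall x : 'rV[R]_p,
     ((m%:R^-1 * \sum_(j < m) Lj j xstar)%:E + h xstar
        <= (m%:R^-1 * \sum_(j < m) Lj j x)%:E + h x)%E)
  (* EDANNI *)
  (rho : R) (hrho : 0 <= rho)
  (A : nat -> 'I_m -> bool) (hA0 : forall j, A 0%N j)
  (* A1: bounded delay *)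
  (tau : nat)
  (hdelay : forall (i : 'I_m) (t : nat),
     exists s : nat, (t - tau <= s)%N /\ (s <= t)%N /\ A s i)
  (x : nat -> 'rV[R]_p)
  (hupdate : forall (t : nat) (z : 'rV[R]_p),
     let G := m%:R^-1 *: \sum_(j < m) gL j (x (last_arrival A t j))
              - gL i1 (x (last_arrival A t i1)) in
     ((Lj i1 (x t.+1) + rho / 2 * sqnorm (x t.+1 - x t) + dotv G (x t.+1 - x t))%:E
        + h (x t.+1)
      <= (Lj i1 z + rho / 2 * sqnorm (z - x t) + dotv G (z - x t))%:E + h z)%E)
  (delta1 : R) (hdelta0 : 0 < delta1)
  (hdelta : (2 * L + rho + 1) / sigma ^+ 2 < delta1) :
  let F := fun (u v : 'rV[R]_p) =>
    ((m%:R^-1 * \sum_(j < m) Lj j u + rho / 2 * sqnorm (u - v))%:E + h u)%E in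
  let c := rho / 2 * (1 + delta1) + delta1 in
  forall t : nat,
    ((c^-1)%:E * (F (x t.+1) (x t) - F xstar xstar)
     <= ((delta1 * L + rho / 2 * (1 + delta1)) / c * sqnorm (x t - x t.+1)
         + c^-1 * (delta1 / (2 * m%:R)) * L ^+ 2
           * \sum_(j < m) sqnorm (x (last_arrival A t j) - x t))%:E)%E.
Proof.
move=> F c t.
set y := x t.+1; set xt := x t; set u := xstar - y.
set S := \sum_(j < m) sqnorm (x (last_arrival A t j) - xt).
have m_gt0 : (0 < m)%N by apply: leq_trans hm.
have L_ge0 : 0 <= L := lipschitz_ge0 hp (hLip i1).
have c_gt0 : 0 < c by rewrite /c; have := hdelta0; nra.
have Lj_convex j a b : Lj j b + dotv (gL j b) (a - b) <= Lj j a.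
  by apply: le_trans (hsc j a b); rewrite lerDl mulr_ge0 ?sqnorm_ge0 // divr_ge0 // ltW.
case: hproper => h_ninfty [x0 hx0].
have hx0_fin : h x0 \is a fin_num by rewrite fin_numE h_ninfty.
have hs_fin := fin_num_of_EFin_addle (h_ninfty _) hx0_fin (hxstar x0).
have hy_fin := fin_num_of_EFin_addle (h_ninfty _) hx0_fin (hupdate t x0).
have prox_opt := prox_step_optimality (Lj_convex i1) (hLip i1) hconv L_ge0 hrho hy_fin hs_fin
  (hupdate t).
have gap := mean_delayed_gap_le hsc hLip L_ge0 (fun j => x (last_arrival A t j)) xt y xstar
  m_gt0 hdelta0.
have grad1_diff := dotv_gradB_le (hLip i1) y xt u.
have rho_term := ler_wpM2l hrho (dotv_le_enorm (y - xt) u).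
have absorb := cross_term_absorption L_ge0 hrho hsigma hdelta (enorm_ge0 (xt - y)) (enorm_ge0 u).
have master_now : last_arrival A t i1 = t by rewrite /last_arrival hi1.
rewrite -/y -/u master_now -/xt !dotvDl dotvNl !dotvZl dotv_suml in prox_opt.
rewrite sumrB mulrBr -/u -/S -enorm_sqr in gap.
rewrite dotvBl -enormN opprB in grad1_diff; rewrite -enormN opprB in rho_term.
rewrite /F /= -(fineK hy_fin) -(fineK hs_fin) subrr sqnorm0 mulr0 addr0.
rewrite -!EFinD -EFinM lee_fin ler_pdivrMl //.
apply: (@le_trans _ _ ((delta1 * L + rho / 2 * (1 + delta1)) * sqnorm (xt - y)
                       + delta1 / (2 * m%:R) * L ^+ 2 * S)).
  by rewrite -[y - xt]opprB sqnormN -!enorm_sqr; lra.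
by rewrite le_eqVlt; apply/orP; left; apply/eqP; field; rewrite pnatr_eq0 -lt0n m_gt0 gt_eqF.
Qed.
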